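(* Under Algorithm 2(b) below (drop when seen, with field size $q\ge n$), at the end of every slot the sender's physical queue size is at most the sum over the $n$ receivers of their virtual queue sizes (the degrees-of-freedom backlogs between the sender and each receiver). Consequently, if $\lambda<\mu$, the expected size of the physical queue in steady state is $O\left(\frac{1}{1-\rho}\right)$ as $\rho=\lambda/\mu\to1^-$ (with $\lambda,\mu\in(0,1)$ and one of them held fixed).
   Context: Model: a sender broadcasts a stream of packets to $n$ receivers. Packets are fixed-length vectors over $\mathbb{F}_q$; the $k$-th arriving packet is $\mathbf{p}_k$. Time is slotted; in each slot one packet arrives with probability $\lambda$ independently (just after the slot begins). The sender transmits at most one linear combination of packets in its queue per slot (coefficients in the header). Each receiver independently receives it with probability $\mu$, else a detectable erasure; independent across receivers and slots. Perfect feedback reaches the sender before the end of the slot; drops happen just before the end of the slot; queue sizes are measured at the end of the slot; $\rho=\lambda/\mu$. A node's knowledge space is the space of coefficient vectors (w.r.t. arrived packets) of linear combinations it can compute; the sender's is $\mathbb{F}_q^{A}$ after $A$ arrivals. The virtual queue size of receiver $j$ is $\dim$(sender's knowledge space) $-\dim$(receiver $j$'s knowledge space). A node has seen $\mathbf{p}_k$ if it can compute $\mathbf{p}_k+\mathbf{q}$ with $\mathbf{q}$ a linear combination of packets of index greater than $k$. If receiver $r$ has seen $\mathbf{p}_k$, its witness $\mathbf{W}_r(\mathbf{p}_k)$ is the unique linear combination it knows of the form $\mathbf{p}_k+\mathbf{q}$ where $\mathbf{q}$ involves only packets of index greater than $k$ that $r$ has not seen. A receiver's next unseen packet is the lowest-index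 packet it has not seen. Algorithm 2(b): Queue rule: at the end of each slot, drop from the queue every packet that all $n$ receivers have seen. Coding module: let $u_1<\dots<u_m$ be the distinct indices of the next unseen packets of those receivers whose next unseen packet has arrived at the sender, and $R(u_i)$ the set of such receivers whose next unseen packet is $\mathbf{p}_{u_i}$. For $j=1,\dots,m$: for each $r\in R(u_j)$ let $\mathbf{y}_r=\sum_{i<j}\alpha_i\mathbf{W}_r(\mathbf{p}_{u_i})$, and choose $\alpha_j\in\mathbb{F}_q$ different from the coefficient of $\mathbf{p}_{u_j}$ in $\mathbf{y}_r$ for every $r\in R(u_j)$. Transmit $\mathbf{g}=\sum_{i=1}^m\alpha_i\mathbf{p}_{u_i}$ (nothing if the queue is empty). *)

(* Packets are indexed by 'I_N (N = a bound on the number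
   of arrivals considered, i.e. on the number of slots simulated); the k-th
   arriving packet p_k is the unit vector e_k of F^N, so the sender's knowledge
   space after A arrivals is span(e_0,...,e_{A-1}) ~ F^A. *)
From HB Require Import structures.
From mathcomp Require Import all_boot all_order all_algebra.
Set Implicit Arguments. Unset Strict Implicit. Unset Printing Implicit Defensive.
Import Order.TTheory GRing.Theory Num.Theory.
Local Open Scope ring_scope.

(* outcome of one slot: (packet arrival?, which receivers got the transmission) *)
Notation outcome n := (bool * {ffun 'I_n -> bool})%type.

Section Model.
Variables (F : finFieldType) (n N : nat).

Definition seenb (K : 'M[F]_N) (k : 'I_N) : bool :=
  [exists v : 'rV[F]_N, [&& (v <= K)%MS, v ord0 k == 1 &
     [forall i : 'I_N, (i < k)%N ==> (v ord0 i == 0)]]].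

Definition witness (K : 'M[F]_N) (k : 'I_N) : 'rV[F]_N :=
  odflt 0 [pick v : 'rV[F]_N | [&& (v <= K)%MS, v ord0 k == 1,
     [forall i : 'I_N, (i < k)%N ==> (v ord0 i == 0)] &
     [forall i : 'I_N, ((k < i)%N && seenb K i) ==> (v ord0 i == 0)]]].

(* index of the next unseen packet (lowest unseen index); N if none. *)
Definition next_unseen (K : 'M[F]_N) : nat :=
  \big[minn/N]_(k : 'I_N | ~~ seenb K k) (k : nat).

(* The coefficient choice: given the slot, the receivers' knowledge spaces,
   the number of arrivals, the coefficients alpha_1..alpha_{j-1} already
   chosen and the set of forbidden values, return alpha_j. *)
Definition chooser :=
  nat -> {ffun 'I_n -> 'M[F]_N} -> nat -> seq F -> {set F} -> F.

Definition coding (ch : chooser) (t : nat) (K : {ffun 'I_n -> 'M[F]_N})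
    (A : nat) : 'rV[F]_N :=
  let U := [seq k : 'I_N <- enum 'I_N |
             (k < A)%N && [exists r : 'I_n, next_unseen (K r) == val k]] in
  let step (acc : seq ('I_N * F)) (u : 'I_N) :=
    let y r := \sum_(p <- acc) p.2 *: witness (K r) p.1 in
    let S := [set (y r) ord0 u | r in [set r : 'I_n | next_unseen (K r) == val u]] in
    rcons acc (u, ch t K A (map snd acc) S) in
  let acc := foldl step [::] U in
  \sum_(p <- acc) p.2 *: (delta_mx ord0 p.1 : 'rV[F]_N).

Record state := State {
  nA : nat;
  queue : {set 'I_N};
  know : {ffun 'I_n -> 'M[F]_N} }.

Definition init_state : state := State 0 set0 [ffun _ => 0].

Definition step_slot (ch : chooser) (t : nat) (s : state) (o : outcome n) : state :=
  (* arrival just after the slot begins *)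
  let arrive := o.1 && (nA s < N)%N in
  let A' := if arrive then (nA s).+1 else nA s in
  let Q1 := if arrive then [set k : 'I_N | val k == nA s] :|: queue s
            else queue s in
  let g := if Q1 == set0 then None else Some (coding ch t (know s) A') in
  let K' := [ffun r => match g with
                       | Some v => if o.2 r then (know s r + v)%MS else know s r
                       | None => know s r end] in
  let Q' := [set k in Q1 | ~~ [forall r : 'I_n, seenb (K' r) k]] in
  State A' Q' K'.

Fixpoint run_from (ch : chooser) (t : nat) (s : state) (os : seq (outcome n))
    : state :=
  if os is o :: os' then run_from ch t.+1 (step_slot ch t s o) os' else s.

Definition run (ch : chooser) (os : seq (outcome n)) : state :=
  run_from ch 0 init_state os.

Definition phys_queue (s : state) : nat := #|queue s|.

(* dim(sender's knowledge space) - dim(receiver r's knowledge space) *)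
Definition virtual_queue (s : state) (r : 'I_n) : nat :=
  (nA s - \rank (know s r))%N.

End Model.

Section Prob.
Variables (R : realFieldType) (F : finFieldType) (n : nat).

Definition slot_prob (lam mu : R) (o : outcome n) : R :=
  (if o.1 then lam else 1 - lam) *
  \prod_(r : 'I_n) (if o.2 r then mu else 1 - mu).

Definition expected_phys_queue (lam mu : R) (ch : forall N : nat, chooser F n N)
    (T : nat) : R :=
  \sum_(w : {ffun 'I_T -> outcome n})
     (\prod_(i : 'I_T) slot_prob lam mu (w i)) *
     (phys_queue (run (ch T) [seq w i | i <- enum 'I_T]))%:R.

End Prob.

(* Let Z_r be the set of arrived packets that receiver r has not seen. A packet
   stays in the queue exactly while some receiver has not seen it, so the queue
   is the union of the Z_r; and a nonzero known vector, suitably scaled, is a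
   witness for the packet at its first nonzero coordinate, so rank K_r is at
   most the number of seen packets and |Z_r| is at most the virtual queue of r.
   Since q >= n, alpha_u can avoid the fewer than q values forbidden by the
   receivers waiting for p_u, so every reception makes the receiver see its
   next unseen packet. Hence |Z_r| is dominated by a reflected random walk that
   moves up with probability lambda(1-mu) and down with probability
   (1-lambda)mu. Its tail at every time is bounded, by induction on time, by
   the geometric stationary tail (lambda(1-mu)/((1-lambda)mu))^j, so
   E|Z_r| <= lambda(1-mu)/(mu-lambda) <= 1/(1-rho) and the expected queue is at
   most n/(1-rho), uniformly in time. *)

From HB Require Import structures.
From mathcomp Require Import all_boot all_order all_algebra zify ring lra.
Import Order.TTheory GRing.Theory Num.Theory.
Set Implicit Arguments. Unset Strict Implicit. Unset Printing Implicit Defensive.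
Local Open Scope ring_scope.

Section SeenPackets.
Variables (F : finFieldType) (N : nat).
Implicit Types (K L : 'M[F]_N) (k : 'I_N) (v : 'rV[F]_N).

Lemma seenbP K k : reflect (exists v, [/\ (v <= K)%MS, v ord0 k = 1 &
  forall i : 'I_N, (i < k)%N -> v ord0 i = 0]) (seenb K k).
Proof.
apply: (iffP existsP) => [[v /and3P[vK /eqP vk /forallP vi]]|[v [vK vk vi]]].
  by exists v; split => // i ik; apply/eqP; exact: (implyP (vi i) ik).
exists v; rewrite vK vk eqxx /=; apply/forallP => i; apply/implyP => ik.
by rewrite vi.
Qed.

Lemma seenbS K L k : (K <= L)%MS -> seenb K k -> seenb L k.
Proof.
move=> KL /seenbP[v [vK vk vi]]; apply/seenbP; exists v; split => //.
exact: submx_trans KL.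
Qed.

(* Gaussian elimination: clear, one at a time, the seen coordinates beyond k
   using the vectors that witness them. *)
Lemma exists_witness K k : seenb K k -> exists v,
  [/\ (v <= K)%MS, v ord0 k = 1, forall i : 'I_N, (i < k)%N -> v ord0 i = 0 &
      forall i : 'I_N, (k < i)%N -> seenb K i -> v ord0 i = 0].
Proof.
move=> sk.
suff /(_ N) [v [vK vk vlt vgt]] : forall m, exists v,
  [/\ (v <= K)%MS, v ord0 k = 1, forall i : 'I_N, (i < k)%N -> v ord0 i = 0 &
      forall i : 'I_N, (k < i)%N -> (i < m)%N -> seenb K i -> v ord0 i = 0].
  by exists v; split => // i ki; apply: vgt.
elim => [|m [v [vK vk vlt vgt]]].
  by have /seenbP[v [vK vk vi]] := sk; exists v; split.
have [mN|] := ltnP m N; last first.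
  move=> Nm; exists v; split => // i ki.
  rewrite ltnS leq_eqVlt => /orP[/eqP im|]; last exact: vgt.
  by have := ltn_ord i; rewrite im ltnNge Nm.
set mi := Ordinal mN.
have [/andP[km /seenbP[w [wK wm wi]]]|nseen] := boolP ((k < m)%N && seenb K mi).
  exists (v - v ord0 mi *: w); split.
  - by rewrite addmx_sub // -scaleNr scalemx_sub.
  - by rewrite !mxE (wi k km) vk mulr0 subr0.
  - move=> i ik; have im : (i < mi)%N by exact: ltn_trans ik km.
    by rewrite !mxE (vlt i ik) (wi i im) mulr0 subr0.
  move=> i ki; rewrite ltnS leq_eqVlt => /orP[/eqP im|im] si.
    have -> : i = mi by exact: val_inj.
    by rewrite !mxE wm mulr1 subrr.
  by rewrite !mxE (vgt i ki im si) (wi i im) mulr0 subr0.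
exists v; split => // i ki; rewrite ltnS leq_eqVlt => /orP[/eqP im|]; last exact: vgt.
have -> : i = mi by exact: val_inj.
by move=> si; case/negP: nseen; rewrite -im ki.
Qed.

Lemma witness_sub K k : (witness K k <= K)%MS.
Proof. by rewrite /witness; case: pickP => [v /and4P[]|] //= _; exact: sub0mx. Qed.

Lemma witnessP K k : seenb K k ->
  [/\ witness K k ord0 k = 1,
      forall i : 'I_N, (i < k)%N -> witness K k ord0 i = 0 &
      forall i : 'I_N, (k < i)%N -> seenb K i -> witness K k ord0 i = 0].
Proof.
move=> /exists_witness[v [vK vk vlt vgt]].
rewrite /witness; case: pickP => [w /and4P[_ /eqP wk /forallP wlt /forallP wgt]|Hnone] /=.
  split => // i ik; first by apply/eqP; exact: (implyP (wlt i) ik).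
  by move=> si; apply/eqP; apply: (implyP (wgt i)); rewrite ik si.
have := Hnone v; rewrite vK vk eqxx /=.
have -> : [forall i : 'I_N, (i < k)%N ==> (v ord0 i == 0)].
  by apply/forallP => i; apply/implyP => ik; rewrite vlt.
have -> // : [forall i : 'I_N, ((k < i)%N && seenb K i) ==> (v ord0 i == 0)].
by apply/forallP => i; apply/implyP => /andP[ki si]; rewrite vgt.
Qed.

Lemma next_unseen_le K k : ~~ seenb K k -> (next_unseen K <= k)%N.
Proof.
rewrite /next_unseen => nk; elim: (index_enum _) (mem_index_enum k) => // i r IH.
rewrite inE big_cons => /orP[/eqP<-|kr]; first by rewrite nk geq_minl.
by case: ifP => _; [apply: leq_trans (geq_minr _ _) (IH kr) | exact: IH].
Qed.

Lemma seenb_below_next K k : (k < next_unseen K)%N -> seenb K k.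
Proof. by apply: contraTT => nk; rewrite -leqNgt next_unseen_le. Qed.

Lemma next_unseenP K : next_unseen K = N \/ exists2 k, ~~ seenb K k & next_unseen K = k.
Proof.
rewrite /next_unseen.
apply: (big_ind (fun x => x = N \/ exists2 k, ~~ seenb K k & x = k)) => //; first by left.
- by move=> x y Hx Hy; rewrite /minn; case: ifP.
- by move=> k nk; right; exists k.
Qed.

Lemma witness_coef_below K (j i : 'I_N) : (j < next_unseen K)%N ->
  (i < next_unseen K)%N -> witness K j ord0 i = (j == i)%:R.
Proof.
move=> /seenb_below_next /witnessP[wj wlt wgt] /seenb_below_next si.
case: (ltngtP i j) => [ij|ji|/val_inj->]; last by rewrite wj eqxx.
- by rewrite wlt //; case: eqP ij => // ->; rewrite ltnn.
- by rewrite wgt //; case: eqP ji => // ->; rewrite ltnn.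
Qed.

(* Projecting onto the seen coordinates is injective on K: a nonzero known
   vector, scaled, witnesses the packet at its first nonzero coordinate. *)
Lemma rank_le_card_seen K (A : nat) :
  (forall v, (v <= K)%MS -> forall i : 'I_N, (A <= i)%N -> v ord0 i = 0) ->
  (\rank K <= #|[set k : 'I_N | (k < A)%N && seenb K k]|)%N.
Proof.
move=> supp; set S := [set k : 'I_N | _].
pose C : 'M[F]_(N, #|S|) := \matrix_(i, j) (i == enum_val j)%:R.
rewrite -(mxrank_mul_ker K C).
suff ->: \rank (K :&: kermx C)%MS = 0%N by rewrite addn0 rank_leq_col.
apply/eqP; rewrite mxrank_eq0; apply/rowV0P => v.
rewrite sub_capmx => /andP[vK /sub_kermxP vC].
have vS s : s \in S -> v ord0 s = 0.
  move=> sS; have := congr1 (fun M : 'M[F]_(1, #|S|) => M ord0 (enum_rank_in sS s)) vC.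
  rewrite !mxE (bigD1 s) //= mxE enum_rankK_in // eqxx mulr1 big1 ?addr0 //.
  by move=> i /negbTE ne; rewrite mxE enum_rankK_in // ne mulr0.
apply/rowP => i; rewrite mxE; apply/eqP/negPn/negP => vi.
have [k vk kmin] :=
  @arg_minnP _ i (fun j : 'I_N => v ord0 j != 0) (fun j : 'I_N => j : nat) vi.
have kA : (k < A)%N.
  by rewrite ltnNge; apply/negP => Ak; move: vk; rewrite (supp v vK k Ak) eqxx.
suff /vS vk0 : k \in S by rewrite vk0 eqxx in vk.
rewrite inE kA /=; apply/seenbP; exists ((v ord0 k)^-1 *: v); split.
- exact: scalemx_sub.
- by rewrite mxE mulVf.
- move=> j jk; rewrite mxE; have [->|nj] := eqVneq (v ord0 j) 0; first by rewrite mulr0.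
  by have := kmin j nj; rewrite leqNgt jk.
Qed.

End SeenPackets.

Section Coding.
Variables (F : finFieldType) (n N : nat) (ch : chooser F n N).
Implicit Types (K : {ffun 'I_n -> 'M[F]_N}) (acc : seq ('I_N * F)).

Definition coding_indices K A : seq 'I_N :=
  [seq k : 'I_N <- enum 'I_N | (k < A)%N && [exists r, next_unseen (K r) == val k]].

Definition known_comb K acc r : 'rV[F]_N := \sum_(p <- acc) p.2 *: witness (K r) p.1.

Definition forbidden K acc (u : 'I_N) : {set F} :=
  [set known_comb K acc r ord0 u | r in [set r | next_unseen (K r) == val u]].

Definition coding_step t K A acc u :=
  rcons acc (u, ch t K A (map snd acc) (forbidden K acc u)).

Lemma codingE t K A : coding ch t K A =
  \sum_(p <- foldl (coding_step t K A) [::] (coding_indices K A)) p.2 *: delta_mx ord0 p.1.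
Proof. by []. Qed.

Lemma mem_coding_indices K A k :
  (k \in coding_indices K A) = (k < A)%N && [exists r, next_unseen (K r) == val k].
Proof. by rewrite mem_filter mem_enum andbT. Qed.

Lemma sorted_coding_indices K A : sorted (fun x y : 'I_N => (x < y)%N) (coding_indices K A).
Proof.
apply: sorted_filter; first exact: (fun y x z => @ltn_trans y x z).
by have := iota_ltn_sorted 0 N; rewrite -val_enum_ord sorted_map.
Qed.

Lemma foldl_coding_step t K A acc l : exists2 tl,
  foldl (coding_step t K A) acc l = acc ++ tl & map fst tl = l.
Proof.
elim: l acc => [|u l IH] acc /=; first by exists [::]; rewrite ?cats0.
have [tl -> <-] := IH (coding_step t K A acc u).
by exists ((u, ch t K A (map snd acc) (forbidden K acc u)) :: tl); rewrite ?cat_rcons.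
Qed.

Lemma coef_sum_delta (s : seq ('I_N * F)) k :
  (\sum_(p <- s) p.2 *: delta_mx ord0 p.1 : 'rV[F]_N) ord0 k =
  \sum_(p <- s) p.2 * (p.1 == k)%:R.
Proof. by rewrite summxE; apply: eq_bigr => p _; rewrite !mxE eqxx eq_sym. Qed.

Lemma coding_sub t K A (i : 'I_N) : (A <= i)%N -> coding ch t K A ord0 i = 0.
Proof.
move=> Ai; rewrite codingE coef_sum_delta.
have [tl -> fs] := foldl_coding_step t K A [::] (coding_indices K A).
rewrite big1_seq // => p /andP[_ pin].
have : p.1 \in coding_indices K A by rewrite -fs map_f.
rewrite mem_coding_indices => /andP[pA _].
by case: eqP pA => [->|]; rewrite ?mulr0 // ltnNge Ai.
Qed.

(* [acc] is the list of coefficients chosen before alpha_u. *)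
Lemma coding_coef_upto t K A u : u \in coding_indices K A -> exists2 acc,
  forall p, p \in acc -> (p.1 \in coding_indices K A) && (p.1 < u)%N &
  forall k : 'I_N, (k <= u)%N -> coding ch t K A ord0 k =
    \sum_(p <- acc) p.2 * (p.1 == k)%:R +
    ch t K A (map snd acc) (forbidden K acc u) * (u == k)%:R.
Proof.
move=> uU; have [U1 [U2 EU]] : exists U1 U2, coding_indices K A = U1 ++ u :: U2.
  by case/splitPr: uU => U1 U2; exists U1, U2.
have ltn_ord_trans : transitive (fun x y : 'I_N => (x < y)%N).
  by move=> y x z; exact: ltn_trans.
have := sorted_coding_indices K A.
rewrite (sorted_pairwise ltn_ord_trans) EU pairwise_cat pairwise_cons allrel_consr.
case/and3P => /andP[/allP U1lt _] _ /andP[/allP U2gt _].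
set acc := foldl (coding_step t K A) [::] U1.
have [tl1 acc_tl1 fs1] := foldl_coding_step t K A [::] U1.
have [tl Hfold fs] := foldl_coding_step t K A (coding_step t K A acc u) U2.
exists acc => [p pin|k ku].
  have pU1 : p.1 \in U1 by rewrite -fs1 map_f //; move: pin; rewrite /acc acc_tl1.
  by rewrite mem_cat pU1 U1lt.
rewrite codingE EU foldl_cat /= -/acc Hfold cat_rcons coef_sum_delta big_cat big_cons /=.
rewrite [X in _ + (_ + X)]big1_seq ?addr0 // => p /andP[_ pin].
have /U2gt up : p.1 \in U2 by rewrite -fs map_f.
by case: eqP up => [->|]; rewrite ?mulr0 // ltnNge ku.
Qed.

Lemma known_comb_coef_below K acc r (k : 'I_N) :
  (forall p, p \in acc -> (p.1 < next_unseen (K r))%N) -> (k < next_unseen (K r))%N ->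
  known_comb K acc r ord0 k = \sum_(p <- acc) p.2 * (p.1 == k)%:R.
Proof.
move=> acc_lt kn; rewrite summxE; apply: eq_big_seq => p pin.
by rewrite mxE witness_coef_below ?acc_lt.
Qed.

(* Each receiver forbids at most one value. If a coefficient was chosen
   before u, the receiver that asked for it forbids nothing at u; otherwise
   every [known_comb] vanishes and only 0 is forbidden. *)
Lemma card_forbidden_lt K A acc (u : 'I_N) : (n <= #|F|)%N ->
  (forall p, p \in acc -> (p.1 \in coding_indices K A) && (p.1 < u)%N) ->
  (#|forbidden K acc u| < #|F|)%N.
Proof.
case: acc => [|p acc] nq Hacc.
  apply: leq_ltn_trans (card_finNzRing_gt1 F); rewrite -(cards1 (0 : F)).
  by apply/subset_leq_card/subsetP => _ /imsetP[r _ ->]; rewrite /known_comb big_nil mxE inE.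
have /andP[] := Hacc p (mem_head _ _).
rewrite mem_coding_indices => /andP[_ /existsP[r1 /eqP r1p]].
rewrite -r1p => r1u; apply: leq_ltn_trans (leq_imset_card _ _) _.
have : [set r | next_unseen (K r) == val u] \subset [set~ r1].
  by apply/subsetP => r; rewrite !inE => /eqP ru; apply: contraTneq r1u => <-; rewrite ru ltnn.
move/subset_leq_card/leq_ltn_trans; apply; rewrite cardsC1 card_ord.
by have := ltn_ord r1; lia.
Qed.

Hypothesis ch_avoids : forall t K A (prev : seq F) (S : {set F}),
  (#|S| < #|F|)%N -> ch t K A prev S \notin S.
Hypothesis n_le_q : (n <= #|F|)%N.

(* Below u the transmission agrees with the combination [known_comb] of
   witnesses the receiver already knows, and at u alpha_u was chosen to differ
   from it, so their difference, scaled, is a witness for u. *)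
Lemma coding_sees_next_unseen t K A r (u : 'I_N) :
  next_unseen (K r) = u -> (u < A)%N -> seenb (K r + coding ch t K A)%MS u.
Proof.
move=> nu uA.
have uU : u \in coding_indices K A.
  by rewrite mem_coding_indices uA; apply/existsP; exists r; rewrite nu.
have [acc acc_lt gE] := coding_coef_upto t uU.
set al := ch t K A _ _ in gE; set g := coding ch t K A in gE *.
set y := known_comb K acc r.
have yK : (y <= K r)%MS by apply: summx_sub => p _; apply/scalemx_sub/witness_sub.
have acc_next p : p \in acc -> (p.1 < next_unseen (K r))%N.
  by move=> /acc_lt/andP[_]; rewrite nu.
have yE (k : 'I_N) (ku : (k < u)%N) : y ord0 k = \sum_(p <- acc) p.2 * (p.1 == k)%:R.
  by rewrite -nu in ku; exact: known_comb_coef_below acc_next ku.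
have v_lt (k : 'I_N) (ku : (k < u)%N) : (g - y) ord0 k = 0.
  rewrite !mxE gE ?(ltnW ku) // yE //.
  by case: eqP ku => [->|_ _]; rewrite ?ltnn // mulr0 addr0 subrr.
have v_u : (g - y) ord0 u = al - y ord0 u.
  rewrite !mxE gE // eqxx mulr1 big1_seq ?add0r // => p /andP[_ /acc_lt].
  by case: eqP => [->|]; rewrite ?mulr0 // ltnn andbF.
have al_new : al != y ord0 u.
  have yS : y ord0 u \in forbidden K acc u by apply/imsetP; exists r; rewrite ?inE ?nu.
  apply/eqP => al_y; have := ch_avoids t K A (map snd acc) (card_forbidden_lt n_le_q acc_lt).
  by rewrite -/al al_y yS.
apply/seenbP; exists (((g - y) ord0 u)^-1 *: (g - y)); split.
- rewrite scalemx_sub // addmx_sub ?addsmxSr // -scaleN1r scalemx_sub //.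
  exact: submx_trans yK (addsmxSl _ _).
- by rewrite mxE mulVf // v_u subr_eq0.
- by move=> i iu; rewrite mxE (v_lt i iu) mulr0.
Qed.

End Coding.

Lemma card_bigcup_le (I T : finType) (B : I -> {set T}) :
  (#|\bigcup_i B i| <= \sum_i #|B i|)%N.
Proof.
elim/big_rec2: _ => [|i x U _ leUx]; first by rewrite cards0.
by rewrite (leq_trans (leq_card_setU _ _).1) ?leq_add2l.
Qed.

Lemma card_ord_ltn (N m : nat) : (#|[set k : 'I_N | (k < m)%N]| <= m)%N.
Proof.
rewrite cardE -(size_map val) -[X in (_ <= X)%N](size_iota 0).
apply: uniq_leq_size; first by rewrite map_inj_uniq ?enum_uniq //; exact: val_inj.
by move=> x /mapP[k]; rewrite mem_enum inE mem_iota => km ->.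
Qed.

(* The reflected random walk that dominates a receiver's backlog. *)
Definition walk_step n (r : 'I_n) (x : nat) (o : outcome n) : nat := (x + o.1 - o.2 r)%N.

Definition walk n (r : 'I_n) (s : seq (outcome n)) : nat := foldl (walk_step r) 0 s.

Lemma foldl_walk_step_mono n (r : 'I_n) os x y : (x <= y)%N ->
  (foldl (walk_step r) x os <= foldl (walk_step r) y os)%N.
Proof.
elim: os x y => //= o os IH x y xy; apply: IH.
by rewrite /walk_step leq_sub2r // leq_add2r.
Qed.

Section Dynamics.
Variables (F : finFieldType) (n N : nat) (ch : chooser F n N).
Implicit Types (s : state F n N) (o : outcome n) (r : 'I_n).

Definition arrival s o := o.1 && (nA s < N)%N.
Definition nA_slot s o := if arrival s o then (nA s).+1 else nA s.
Definition queue_slot s o :=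
  if arrival s o then [set k : 'I_N | val k == nA s] :|: queue s else queue s.

Definition unseen_arrived s r : {set 'I_N} :=
  [set k : 'I_N | (k < nA s)%N && ~~ seenb (know s r) k].

Definition consistent s : Prop := [/\ (nA s <= N)%N,
  queue s = [set k : 'I_N | (k < nA s)%N && [exists r, ~~ seenb (know s r) k]] &
  forall r (v : 'rV[F]_N), (v <= know s r)%MS ->
    forall i : 'I_N, (nA s <= i)%N -> v ord0 i = 0].

Lemma nA_step t s o : nA (step_slot ch t s o) = nA_slot s o.
Proof. by []. Qed.

Lemma nA_slotE s o : nA_slot s o = (nA s + arrival s o)%N.
Proof. by rewrite /nA_slot; case: arrival; rewrite ?addn1 ?addn0. Qed.

Lemma know_step t s o r : know (step_slot ch t s o) r =
  if (queue_slot s o != set0) && o.2 r then (know s r + coding ch t (know s) (nA_slot s o))%MS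
  else know s r.
Proof. by rewrite /step_slot /= ffunE; case: eqP; case: (o.2 r). Qed.

Lemma queue_step t s o : queue (step_slot ch t s o) =
  [set k in queue_slot s o | ~~ [forall r, seenb (know (step_slot ch t s o) r) k]].
Proof. by []. Qed.

Lemma know_stepS t s o r : (know s r <= know (step_slot ch t s o) r)%MS.
Proof. by rewrite know_step; case: ifP => _; rewrite ?addsmxSl. Qed.

Lemma unseen_step t s o r k : ~~ seenb (know (step_slot ch t s o) r) k ->
  ~~ seenb (know s r) k.
Proof. exact/contra/seenbS/know_stepS. Qed.

Lemma mem_queue_slot s o k : consistent s -> [exists r, ~~ seenb (know s r) k] ->
  (k \in queue_slot s o) = (k < nA_slot s o)%N.
Proof.
case=> _ qE _ ex; rewrite /queue_slot /nA_slot qE.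
by case: arrival; rewrite !inE ex andbT // ltnS [RHS]leq_eqVlt.
Qed.

Lemma consistent_init : consistent (init_state F n N).
Proof.
split => //= r v.
by rewrite ffunE submx0 => /eqP -> i _; rewrite mxE.
Qed.

Lemma consistent_step t s o : consistent s -> consistent (step_slot ch t s o).
Proof.
move=> cs; have [NA qE supp] := cs; split; rewrite nA_step.
- by rewrite /nA_slot /arrival; case: o.1 => //=; case: ltnP.
- apply/setP => k; rewrite queue_step !inE negb_forall.
  have [/existsP[r nr]|_] := boolP [exists r, ~~ seenb (know (step_slot ch t s o) r) k].
  all: rewrite ?andbF ?andbT //.
  by apply: mem_queue_slot cs _; apply/existsP; exists r; exact: unseen_step nr.
move=> r v; rewrite know_step nA_slotE => + i Ai.
have Ai' : (nA s <= i)%N by apply: leq_trans Ai; rewrite leq_addr.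
case: ifP => _; last by move/supp; apply.
case/sub_addsmxP => -[u1 u2] /= ->.
rewrite mxE (supp r (u1 *m know s r) (submxMl _ _) i Ai') add0r mxE big_ord1.
by rewrite coding_sub ?mulr0.
Qed.

Lemma consistent_run t s os : consistent s -> consistent (run_from ch t s os).
Proof. by elim: os t s => //= o os IH t s cs; apply/IH/consistent_step. Qed.

Lemma run_consistent os : consistent (run ch os).
Proof. exact/consistent_run/consistent_init. Qed.

Lemma phys_queue_le_unseen s : consistent s ->
  (phys_queue s <= \sum_r #|unseen_arrived s r|)%N.
Proof.
case=> _ qE _; apply: leq_trans (card_bigcup_le (unseen_arrived s)).
apply/subset_leq_card/subsetP => k; rewrite qE inE => /andP[kA /existsP[r nr]].
by apply/bigcupP; exists r; rewrite ?inE ?kA.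
Qed.

(* The arrived packets split into seen and unseen ones, and the seen ones
   bound the rank. *)
Lemma card_unseen_le_virtual s r : consistent s ->
  (#|unseen_arrived s r| <= virtual_queue s r)%N.
Proof.
case=> _ _ supp; rewrite /virtual_queue.
have := cardsID [set k : 'I_N | seenb (know s r) k] [set k : 'I_N | (k < nA s)%N].
rewrite (_ : _ :&: _ = [set k : 'I_N | (k < nA s)%N && seenb (know s r) k]); last first.
  by apply/setP => k; rewrite !inE.
rewrite (_ : _ :\: _ = unseen_arrived s r) => [cardE|]; last first.
  by apply/setP => k; rewrite !inE andbC.
rewrite -(addKn #|[set k : 'I_N | (k < nA s)%N && seenb (know s r) k]| #|_|) cardE.
exact: leq_sub (card_ord_ltn N (nA s)) (rank_le_card_seen (supp r)).
Qed.

Lemma phys_queue_le_virtual os :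
  (phys_queue (run ch os) <= \sum_r virtual_queue (run ch os) r)%N.
Proof.
apply: leq_trans (phys_queue_le_unseen (run_consistent os)) _.
by apply: leq_sum => r _; apply: card_unseen_le_virtual (run_consistent os).
Qed.

Lemma card_unseen_slot s o r :
  (#|[set k : 'I_N | (k < nA_slot s o)%N && ~~ seenb (know s r) k]|
     <= #|unseen_arrived s r| + arrival s o)%N.
Proof.
rewrite nA_slotE; case arr: (arrival s o); last first.
  by rewrite !addn0; apply/subset_leq_card/subsetP => k; rewrite !inE.
have NA : (nA s < N)%N by case/andP: arr.
have sub : [set k : 'I_N | (k < nA s + 1)%N && ~~ seenb (know s r) k]
    \subset unseen_arrived s r :|: [set Ordinal NA].
  apply/subsetP => k; rewrite !inE addn1 ltnS leq_eqVlt.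
  case/andP => /orP[/eqP kA|->] ->; rewrite ?orbT //.
  by apply/orP; right; apply/eqP/val_inj.
apply: leq_trans (subset_leq_card sub) (leq_trans (leq_card_setU _ _).1 _).
by rewrite cards1.
Qed.

Hypothesis ch_avoids : forall t K A (prev : seq F) (S : {set F}),
  (#|S| < #|F|)%N -> ch t K A prev S \notin S.
Hypothesis n_le_q : (n <= #|F|)%N.

Lemma reception_sees_unseen t s o r (k : 'I_N) : consistent s -> o.2 r ->
  (k < nA_slot s o)%N -> ~~ seenb (know s r) k ->
  exists2 u : 'I_N, (u < nA_slot s o)%N && ~~ seenb (know s r) u &
    seenb (know (step_slot ch t s o) r) u.
Proof.
move=> cs rec kA nk; have [nN|[u nu unx]] := next_unseenP (know s r).
  by have := next_unseen_le nk; rewrite nN leqNgt ltn_ord.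
have uA : (u < nA_slot s o)%N by apply: leq_ltn_trans kA; rewrite -unx next_unseen_le.
exists u; first by rewrite uA nu.
have Qne : queue_slot s o != set0.
  by apply/set0Pn; exists u; rewrite mem_queue_slot //; apply/existsP; exists r.
by rewrite know_step Qne rec; exact: coding_sees_next_unseen.
Qed.

Lemma card_unseen_step t s o r : consistent s ->
  (#|unseen_arrived (step_slot ch t s o) r| <= walk_step r #|unseen_arrived s r| o)%N.
Proof.
move=> cs; have := card_unseen_slot s o r.
set X := [set k : 'I_N | (k < nA_slot s o)%N && ~~ seenb (know s r) k] => Xle.
have ZX : unseen_arrived (step_slot ch t s o) r \subset X.
  by apply/subsetP => k; rewrite !inE nA_step => /andP[-> /unseen_step].
have arr_le : (arrival s o <= o.1)%N by rewrite /arrival; case: o.1; rewrite ?leq_b1.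
rewrite /walk_step; case rec: (o.2 r); last first.
  by rewrite subn0 (leq_trans (subset_leq_card ZX)) // (leq_trans Xle) ?leq_add2l.
have [X0|[k]] := set_0Vmem X.
  by move: (subset_leq_card ZX); rewrite X0 cards0 leqn0 => /eqP ->.
rewrite inE => /andP[kA nk].
have [u uX su] := reception_sees_unseen t cs rec kA nk.
have ZXu : unseen_arrived (step_slot ch t s o) r \subset X :\ u.
  apply/subsetP => j jZ; rewrite in_setD1 (subsetP ZX j jZ) andbT.
  by apply: contraTneq jZ => ->; rewrite inE su andbF.
have XZ : (#|X| <= #|unseen_arrived s r| + o.1)%N by rewrite (leq_trans Xle) ?leq_add2l.
rewrite (cardsD1 u X) inE uX add1n in XZ.
by rewrite (leq_trans (subset_leq_card ZXu)) // leq_subRL ?add1n // (leq_trans _ XZ).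
Qed.

Lemma card_unseen_run t s os r : consistent s ->
  (#|unseen_arrived (run_from ch t s os) r| <= foldl (walk_step r) #|unseen_arrived s r| os)%N.
Proof.
elim: os t s => //= o os IH t s cs.
apply: leq_trans (IH _ _ (consistent_step t o cs)) _.
exact/foldl_walk_step_mono/card_unseen_step.
Qed.

Lemma phys_queue_le_walks os : (phys_queue (run ch os) <= \sum_r walk r os)%N.
Proof.
apply: leq_trans (phys_queue_le_unseen (run_consistent os)) _; apply: leq_sum => r _.
have := card_unseen_run 0 os r consistent_init.
by rewrite (_ : unseen_arrived (init_state F n N) r = set0) ?cards0.
Qed.

End Dynamics.

Lemma sum_exprS_le (R : realFieldType) (x : R) (T : nat) :
  0 <= x < 1 -> \sum_(i < T) x ^+ i.+1 <= x / (1 - x).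
Proof.
case/andP=> x0 x1; have x1' : 0 < 1 - x by rewrite subr_gt0.
under eq_bigr do rewrite exprS.
rewrite -mulr_sumr ler_wpM2l // -[_^-1]mul1r ler_pdivlMr //.
have -> : (\sum_(i < T) x ^+ i) * (1 - x) = 1 - x ^+ T.
  by rewrite mulrC -[1 - x]opprB mulNr -subrX1 opprB.
by rewrite gerBl exprn_ge0.
Qed.

Definition ffun_rcons (X : Type) T (w : {ffun 'I_T -> X}) (x : X) : {ffun 'I_T.+1 -> X} :=
  [ffun i => if unlift ord_max i is Some j then w j else x].

Lemma ffun_rcons_widen (X : Type) T (w : {ffun 'I_T -> X}) x (j : 'I_T) :
  ffun_rcons w x (widen_ord (leqnSn T) j) = w j.
Proof.
rewrite ffunE (_ : widen_ord _ j = lift ord_max j) ?liftK //.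
by apply/val_inj; rewrite [RHS]lift_max.
Qed.

Lemma ffun_rcons_max (X : Type) T (w : {ffun 'I_T -> X}) x : ffun_rcons w x ord_max = x.
Proof. by rewrite ffunE unlift_none. Qed.

Lemma map_ffun_rcons (X : Type) T (w : {ffun 'I_T -> X}) x :
  [seq ffun_rcons w x i | i <- enum 'I_T.+1] = rcons [seq w i | i <- enum 'I_T] x.
Proof.
rewrite enum_ordSr map_rcons ffun_rcons_max -map_comp; congr rcons.
by apply: eq_map => j /=; rewrite ffun_rcons_widen.
Qed.

Lemma ffun_rcons_bij (X : finType) T :
  bijective (fun p : {ffun 'I_T -> X} * X => ffun_rcons p.1 p.2).
Proof.
exists (fun w : {ffun 'I_T.+1 -> X} => ([ffun j => w (widen_ord (leqnSn T) j)], w ord_max)).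
  move=> [w x] /=; rewrite ffun_rcons_max; congr pair.
  by apply/ffunP => j; rewrite ffunE ffun_rcons_widen.
move=> w; apply/ffunP => i; rewrite ffunE.
case: unliftP => [j ->|->] //=; rewrite ffunE; congr (w _); apply/val_inj.
by rewrite [RHS]lift_max.
Qed.

Lemma sum_ltn_indicator (R : pzSemiRingType) (x T : nat) : (x <= T)%N ->
  \sum_(k < T) ((k < x)%N)%:R = x%:R :> R.
Proof.
elim: T x => [|T IH] x; first by rewrite leqn0 => /eqP ->; rewrite big_ord0.
rewrite leq_eqVlt ltnS => /orP[/eqP ->|xT].
  by rewrite (eq_bigr (fun _ => 1)) => [|k _]; rewrite ?sumr_const ?card_ord ?ltn_ord.
by rewrite big_ord_recr /= IH // ltnNge xT addr0.
Qed.

Lemma walk_le_size n (r : 'I_n) s : (walk r s <= size s)%N.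
Proof.
rewrite /walk; suff /(_ 0%N) : forall x, (foldl (walk_step r) x s <= x + size s)%N by [].
elim: s => [|o s IH] x /=; first by rewrite addn0.
apply: leq_trans (IH _) _; rewrite addnS -addSn leq_add2r /walk_step.
by apply: leq_trans (leq_subr _ _) _; case: o.1; rewrite ?addn1 ?addn0.
Qed.

Section Expectation.
Variables (R : realFieldType) (n : nat) (lam mu : R).
Hypotheses (lam_ge0 : 0 <= lam) (lam_le1 : lam <= 1) (mu_ge0 : 0 <= mu) (mu_le1 : mu <= 1).

Notation p := (@slot_prob R n lam mu).

Definition expect T (f : seq (outcome n) -> R) : R :=
  \sum_(w : {ffun 'I_T -> outcome n}) (\prod_(i < T) p (w i)) * f [seq w i | i <- enum 'I_T].

Lemma slot_prob_ge0 o : 0 <= p o.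
Proof.
rewrite /slot_prob mulr_ge0 //; first by case: o.1; rewrite ?subr_ge0.
by apply: prodr_ge0 => r _; case: (o.2 r); rewrite ?subr_ge0.
Qed.

Lemma sum_receptions (r : 'I_n) (h : bool -> R) :
  \sum_(f : {ffun 'I_n -> bool}) (\prod_(r' < n) (if f r' then mu else 1 - mu)) * h (f r) =
  mu * h true + (1 - mu) * h false.
Proof.
pose G (i : 'I_n) (b : bool) := (if b then mu else 1 - mu) * (if i == r then h b else 1).
transitivity (\sum_(f : {ffun 'I_n -> bool}) \prod_i G i (f i)).
  apply: eq_bigr => f _; rewrite /G big_split /=; congr (_ * _).
  by rewrite (bigD1 r) //= eqxx big1 ?mulr1 // => i /negbTE ->.
rewrite -bigA_distr_bigA (bigD1 r) //= [X in _ * X]big1 ?mulr1.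
  by rewrite big_bool /G eqxx addrC.
by move=> i /negbTE ir; rewrite big_bool /G ir /=; ring.
Qed.

Lemma sum_slot_prob_receiver (r : 'I_n) (H : bool -> bool -> R) :
  \sum_o p o * H o.1 (o.2 r) =
  lam * (mu * H true true + (1 - mu) * H true false) +
  (1 - lam) * (mu * H false true + (1 - mu) * H false false).
Proof.
rewrite -(pair_bigA _ (fun a f => p (a, f) * H a (f r))) big_bool /=.
by congr (_ + _); rewrite -(sum_receptions r) mulr_sumr; apply: eq_bigr => f _; rewrite mulrA.
Qed.

Lemma sum_slot_prob : \sum_o p o = 1.
Proof.
rewrite -(pair_bigA _ (fun a f => p (a, f))) big_bool /slot_prob /= -!mulr_sumr.
rewrite -(bigA_distr_bigA (fun (i : 'I_n) (b : bool) => if b then mu else 1 - mu)).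
by rewrite big1 => [|i _]; rewrite ?big_bool /=; ring.
Qed.

Lemma expect0 f : expect 0 f = f [::].
Proof.
rewrite /expect (eq_bigr (fun _ => f [::])) => [|w _]; last first.
  by rewrite big_ord0 mul1r; congr f; apply: size0nil; rewrite size_map size_enum_ord.
by rewrite sumr_const card_ffun card_ord expn0.
Qed.

Lemma expect_rcons T f :
  expect T.+1 f = expect T (fun s => \sum_o p o * f (rcons s o)).
Proof.
rewrite /expect (reindex _ (onW_bij _ (ffun_rcons_bij _ T))) /=.
rewrite -(pair_bigA _ (fun w o => (\prod_(i < T.+1) p (ffun_rcons w o i)) *
  f [seq ffun_rcons w o i | i <- enum 'I_T.+1])) /=.
apply: eq_bigr => w _; rewrite mulr_sumr; apply: eq_bigr => o _.
rewrite big_ord_recr /= ffun_rcons_max map_ffun_rcons -mulrA; congr (_ * _).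
by apply: eq_bigr => i _; rewrite ffun_rcons_widen.
Qed.

Lemma ler_expect T f g : (forall s, size s = T -> f s <= g s) -> expect T f <= expect T g.
Proof.
move=> fg; apply: ler_sum => w _; apply: ler_wpM2l.
  by apply: prodr_ge0 => i _; exact: slot_prob_ge0.
by apply: fg; rewrite size_map size_enum_ord.
Qed.

Lemma eq_expect T f g : f =1 g -> expect T f = expect T g.
Proof. by move=> fg; apply: eq_bigr => w _; rewrite fg. Qed.

Lemma expect_sum T m (f : 'I_m -> seq (outcome n) -> R) :
  expect T (fun s => \sum_(i < m) f i s) = \sum_(i < m) expect T (f i).
Proof. by rewrite /expect exchange_big; apply: eq_bigr => w _; rewrite mulr_sumr. Qed.

Lemma expect_comb3 T a b c f g h :
  expect T (fun s => a * f s + b * g s + c * h s) =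
  a * expect T f + b * expect T g + c * expect T h.
Proof. by rewrite /expect !mulr_sumr -!big_split; apply: eq_bigr => w _ /=; ring. Qed.

Lemma expect1 T : expect T (fun _ => 1) = 1.
Proof.
elim: T => [|T IH]; first by rewrite expect0.
rewrite expect_rcons -[RHS]IH; apply: eq_expect => s.
by rewrite (eq_bigr _ (fun o _ => mulr1 (p o))) sum_slot_prob.
Qed.

Definition p_up := lam * (1 - mu).
Definition p_down := (1 - lam) * mu.
Definition p_stay := lam * mu + (1 - lam) * (1 - mu).

Definition walk_tail T (r : 'I_n) j := expect T (fun s => ((j <= walk r s)%N)%:R).

Lemma sum_walk_step_tail (r : 'I_n) j x :
  \sum_o p o * ((j <= walk_step r x o)%N)%:R =
  p_stay * ((j <= x)%N)%:R + p_up * ((j <= x.+1)%N)%:R + p_down * ((j <= x.-1)%N)%:R.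
Proof.
rewrite (sum_slot_prob_receiver r (fun a b => ((j <= x + a - b)%N)%:R)) /=.
by rewrite ?addn1 ?addn0 ?subn1 ?subn0 /p_stay /p_up /p_down /=; ring.
Qed.

Lemma walk_tail_rec T r j : walk_tail T.+1 r j.+1 =
  p_stay * walk_tail T r j.+1 + p_up * walk_tail T r j + p_down * walk_tail T r j.+2.
Proof.
rewrite /walk_tail expect_rcons -expect_comb3; apply: eq_expect => s.
under eq_bigr do rewrite /walk foldl_rcons.
rewrite sum_walk_step_tail ltnS; congr (_ + _ * _).
by rewrite /walk; case: (foldl _ _ _).
Qed.

Lemma walk_tail0 T r : walk_tail T r 0 = 1.
Proof. exact: expect1. Qed.

(* [(p_up / p_down) ^+ j] is the tail of the stationary law of the walk, a
   fixed point of the tail recursion. *)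
Lemma walk_tail_le_geometric T r j : 0 < p_down -> walk_tail T r j <= (p_up / p_down) ^+ j.
Proof.
move=> down_gt0; set q := p_up / p_down.
have up_ge0 : 0 <= p_up by rewrite mulr_ge0 ?subr_ge0.
have q_ge0 : 0 <= q by rewrite divr_ge0 // ltW.
have down_q : p_down * q = p_up by rewrite mulrC divfK // gt_eqF.
have stay_ge0 : 0 <= p_stay by rewrite addr_ge0 // mulr_ge0 ?subr_ge0.
elim: T j => [|T IH] [|j]; rewrite ?walk_tail0 ?expr0 //.
  by rewrite /walk_tail expect0 exprn_ge0.
rewrite walk_tail_rec.
apply: le_trans (_ : p_stay * q ^+ j.+1 + p_up * q ^+ j + p_down * q ^+ j.+2 <= _).
  by rewrite !lerD ?ler_wpM2l ?IH // ltW.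
suff -> : p_stay * q ^+ j.+1 + p_up * q ^+ j + p_down * q ^+ j.+2 = q ^+ j.+1 by [].
rewrite !exprS; set z := q ^+ j.
have e1 : p_down * (q * (q * z)) = p_up * (q * z).
  by rewrite -down_q !mulrA.
have e2 : p_up * z = p_down * (q * z) by rewrite [RHS]mulrA down_q.
by rewrite e1 e2 /p_stay /p_up /p_down; ring.
Qed.

Lemma expect_walk_le T r : 0 < p_down -> p_up < p_down ->
  expect T (fun s => (walk r s)%:R) <= (p_up / p_down) / (1 - p_up / p_down).
Proof.
move=> down_gt0 up_lt; have q01 : 0 <= p_up / p_down < 1.
  by rewrite ltr_pdivrMr // mul1r up_lt divr_ge0 ?(ltW down_gt0) // mulr_ge0 ?subr_ge0.
apply: le_trans (_ : expect T (fun s => \sum_(k < T) ((k.+1 <= walk r s)%N)%:R) <= _).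
  by apply: ler_expect => s sT; rewrite sum_ltn_indicator // -sT walk_le_size.
rewrite expect_sum; apply: le_trans (sum_exprS_le T q01); apply: ler_sum => k _.
exact: walk_tail_le_geometric.
Qed.

End Expectation.

Lemma expected_phys_queue_le (R : realFieldType) (F : finFieldType) (n : nat)
  (ch : forall N : nat, chooser F n N)
  (ch_avoids : forall (N t : nat) (K : {ffun 'I_n -> 'M[F]_N}) (A : nat)
           (prev : seq F) (S : {set F}),
           (#|S| < #|F|)%N -> ch N t K A prev S \notin S)
  (n_le_q : (n <= #|F|)%N) (lam mu : R) :
  0 < lam -> lam < mu -> mu < 1 -> forall T,
  expected_phys_queue lam mu ch T <= n%:R / (1 - lam / mu).
Proof.
move=> lam_gt0 lam_lt mu_lt1 T.
have [lam_ge0 lam_le1 mu_ge0 mu_le1] : [/\ 0 <= lam, lam <= 1, 0 <= mu & mu <= 1].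
  by split; lra.
have down_gt0 : 0 < p_down lam mu by rewrite mulr_gt0 ?subr_gt0 //; lra.
have up_lt : p_up lam mu < p_down lam mu by rewrite /p_up /p_down; nra.
rewrite (_ : expected_phys_queue _ _ _ _ =
  expect lam mu T (fun s => (phys_queue (run (ch T) s))%:R)) //.
apply: le_trans (_ : expect lam mu T (fun s => \sum_(r < n) (walk r s)%:R) <= _).
  apply: ler_expect => // s _; rewrite -natr_sum ler_nat.
  exact: phys_queue_le_walks (ch_avoids T) n_le_q s.
set q := p_up lam mu / p_down lam mu.
rewrite expect_sum; apply: le_trans (_ : \sum_(r < n) (q / (1 - q)) <= _).
  by apply: ler_sum => r _; exact: expect_walk_le.
rewrite sumr_const card_ord -[X in X <= _]mulr_natl ler_wpM2l ?ler0n //.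
have mu_lam : mu - lam != 0 by rewrite subr_eq0 gt_eqF.
have mu_neq0 : mu != 0 by rewrite gt_eqF // (lt_trans lam_gt0).
have lam_neq1 : 1 - lam != 0 by rewrite subr_eq0 gt_eqF // (lt_trans lam_lt).
have -> : q / (1 - q) = p_up lam mu / (mu - lam).
  by rewrite /q /p_up /p_down; field; rewrite mu_lam mu_neq0 lam_neq1.
have -> : (1 - lam / mu)^-1 = mu / (mu - lam) by field; rewrite mu_lam mu_neq0.
by rewrite ler_wpM2r ?invr_ge0 ?subr_ge0 ?(ltW lam_lt) // /p_up; nra.
Qed.

Unset Implicit Arguments.

Theorem theorem6 (F : finFieldType) (n : nat) (R : realFieldType)
  (ch : forall N : nat, chooser F n N)
  (Hch : forall (N t : nat) (K : {ffun 'I_n -> 'M[F]_N}) (A : nat)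
           (prev : seq F) (S : {set F}),
           (#|S| < #|F|)%N -> ch N t K A prev S \notin S)
  (Hq : (n <= #|F|)%N) :
  (forall (N : nat) (os : seq (outcome n)), (size os <= N)%N ->
     (phys_queue (run (ch N) os) <=
        \sum_(r < n) virtual_queue (run (ch N) os) r)%N)
  /\
  (forall mu : R, 0 < mu < 1 ->
     exists C delta : R, 0 < delta /\
       forall lam : R, 0 < lam -> lam < mu -> 1 - delta < lam / mu ->
         exists T0 : nat, forall T : nat, (T0 <= T)%N ->
           expected_phys_queue lam mu ch T <= C / (1 - lam / mu))
  /\
  (forall lam : R, 0 < lam < 1 ->
     exists C delta : R, 0 < delta /\
       forall mu : R, lam < mu -> mu < 1 -> 1 - delta < lam / mu ->
         exists T0 : nat, forall T : nat, (T0 <= T)%N ->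
           expected_phys_queue lam mu ch T <= C / (1 - lam / mu)).
Proof.
have bound := expected_phys_queue_le Hch Hq.
split; first by move=> N os _; exact: phys_queue_le_virtual.
split.
- move=> mu /andP[_ mu_lt1]; exists n%:R, 1; split; first exact: ltr01.
  by move=> lam lam_gt0 lam_lt _; exists 0%N => T _; exact: bound.
- move=> lam /andP[lam_gt0 _]; exists n%:R, 1; split; first exact: ltr01.
  by move=> mu lam_lt mu_lt1 _; exists 0%N => T _; exact: bound.
Qed.
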